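(* Let $R$ be a commutative ring and consider morphisms $(f_t,f_h)\colon(L_t,L_h;\lambda_a,\lambda_b)\to(M_t,M_h;\mu_a,\mu_b)$ and $(g_t,g_h)\colon(M_t,M_h;\mu_a,\mu_b)\to(N_t,N_h;\eta_a,\eta_b)$ in $\mathrm{Rep}_R(\varkappa)$ with zero composite, such that the sequences $L_t\xrightarrow{f_t}M_t\xrightarrow{g_t}N_t$ and $L_h\xrightarrow{f_h}M_h\xrightarrow{g_h}N_h$ are exact at the middle term, and such that $f_h$ is injective. If $(L_t,L_h;\lambda_a,\lambda_b)$ and $(N_t,N_h;\eta_a,\eta_b)$ lie in $\mathrm{Rel}_R(\varkappa)$, then so does $(M_t,M_h;\mu_a,\mu_b)$.
   Context: $\mathrm{Rep}_R(\varkappa)$ has objects $(M_t,M_h;\mu_a,\mu_b)$ with $M_t,M_h$ $R$-modules and $\mu_a,\mu_b\in\mathrm{Hom}_R(M_t,M_h)$; morphisms are pairs $(f_t,f_h)$ of $R$-linear maps with $f_h\lambda_c=\mu_cf_t$ for $c=a,b$, composed componentwise. $\mathrm{Rel}_R(\varkappa)$ is the full subcategory of objects with $\ker(\mu_a)\cap\ker(\mu_b)=0$. *)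

From HB Require Import structures.
From mathcomp Require Import all_boot all_algebra.
Set Implicit Arguments. Unset Strict Implicit. Unset Printing Implicit Defensive.
Import GRing.Theory.
Local Open Scope ring_scope.

(* Representations of the Kronecker quiver kappa over a commutative ring R:
   an object is (M_t, M_h; mu_a, mu_b) with mu_a, mu_b : M_t -> M_h R-linear. *)

Definition is_rep_morphism (R : comPzRingType) (Lt Lh Mt Mh : lmodType R)
  (la lb : {linear Lt -> Lh}) (mua mub : {linear Mt -> Mh})
  (ft : {linear Lt -> Mt}) (fh : {linear Lh -> Mh}) : Prop :=
  (forall x, fh (la x) = mua (ft x)) /\ (forall x, fh (lb x) = mub (ft x)).

Definition in_Rel (R : comPzRingType) (Mt Mh : lmodType R)
  (mua mub : {linear Mt -> Mh}) : Prop :=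
  forall x, mua x = 0 -> mub x = 0 -> x = 0.

Definition exact_at (R : comPzRingType) (L M N : lmodType R)
  (f : {linear L -> M}) (g : {linear M -> N}) : Prop :=
  forall m, g m = 0 <-> exists l, f l = m.

(* The common kernel ker mu_a ∩ ker mu_b is carried by g_t into that of N,
   which is zero, so it lies in ker g_t = im f_t.  An element f_t l of it
   forces f_h (la l) = f_h (lb l) = 0, so l lies in the (zero) common kernel
   of L by injectivity of f_h. *)
From HB Require Import structures.
From mathcomp Require Import all_boot all_algebra.
Set Implicit Arguments. Unset Strict Implicit. Unset Printing Implicit Defensive.
Import GRing.Theory.
Local Open Scope ring_scope.

Section RepMorphismKernels.

Variables (R : comPzRingType) (Lt Lh Mt Mh : lmodType R).
Variables (la lb : {linear Lt -> Lh}) (mua mub : {linear Mt -> Mh}).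
Variables (ft : {linear Lt -> Mt}) (fh : {linear Lh -> Mh}).
Hypothesis f_mor : is_rep_morphism la lb mua mub ft fh.

Lemma rep_morphism_ker (x : Lt) :
  la x = 0 -> lb x = 0 -> mua (ft x) = 0 /\ mub (ft x) = 0.
Proof.
by case: f_mor => fa fb ha hb; rewrite -fa -fb ha hb linear0.
Qed.

Lemma rep_morphism_ker_Rel (x : Lt) :
  in_Rel mua mub -> la x = 0 -> lb x = 0 -> ft x = 0.
Proof.
by move=> relM ha hb; have [] := rep_morphism_ker ha hb; apply: relM.
Qed.

Lemma rep_morphism_injh_ker (x : Lt) :
  injective fh -> mua (ft x) = 0 -> mub (ft x) = 0 -> la x = 0 /\ lb x = 0.
Proof.
case: f_mor => fa fb inj_fh ha hb.
by split; apply: inj_fh; rewrite linear0 ?fa ?fb.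
Qed.

End RepMorphismKernels.

Theorem lemma3p4 (R : comPzRingType)
  (Lt Lh Mt Mh Nt Nh : lmodType R)
  (la lb : {linear Lt -> Lh}) (mua mub : {linear Mt -> Mh})
  (eta_a eta_b : {linear Nt -> Nh})
  (ft : {linear Lt -> Mt}) (fh : {linear Lh -> Mh})
  (gt : {linear Mt -> Nt}) (gh : {linear Mh -> Nh}) :
  is_rep_morphism la lb mua mub ft fh ->
  is_rep_morphism mua mub eta_a eta_b gt gh ->
  (forall x, gt (ft x) = 0) -> (forall y, gh (fh y) = 0) ->
  exact_at ft gt -> exact_at fh gh ->
  injective fh ->
  in_Rel la lb -> in_Rel eta_a eta_b ->
  in_Rel mua mub.
Proof.
move=> f_mor g_mor _ _ exact_t _ inj_fh relL relN x ha hb.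
have gx0 : gt x = 0 := rep_morphism_ker_Rel g_mor relN ha hb.
have [l def_x] := (exact_t x).1 gx0; subst x.
have [hla hlb] := rep_morphism_injh_ker f_mor inj_fh ha hb.
by rewrite (relL l hla hlb) linear0.
Qed.
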